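(* Let $0<c<1$, $1<t<2$, $0<b<1$, put $a_n=c^{t^n}$ and $F_n(z,w)=(z^2+a_nw,\ a_nz)$ for $n\geq1$. Let $\Omega=\{(z,w)\in\mathbb{C}^2: F_n\circ\cdots\circ F_1(z,w)\to0\}$ and let $K\subseteq\Omega$ be compact. Writing $(z_n,w_n)=F_n\circ\cdots\circ F_1(z,w)$ and $\delta_n=\max\{|z_n|,|w_n|:(z,w)\in K\}$, there exists $n_0$ such that $\delta_{n+k}\leq a_{n+k+1}b^k$ for all $n\geq n_0$ and all $k\geq0$. *)

From HB Require Import structures.
From mathcomp Require Import all_boot all_order all_algebra.
From mathcomp Require Import all_classical all_reals all_analysis.
From mathcomp.real_closed Require Import complex.
Export complex.
Import Order.TTheory GRing.Theory Num.Theory.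
Import numFieldNormedType.Exports.
Set Implicit Arguments. Unset Strict Implicit. Unset Printing Implicit Defensive.
Local Open Scope ring_scope.
Local Open Scope classical_set_scope.

(* Equip C = R[i] with its standard (norm) topology / metric, via the generic
   construction of MathComp-Analysis for numeric fields (R[i] is a
   numClosedFieldType whose norm is the modulus). *)
HB.instance Definition _ (R : rcfType) := PseudoPointedMetric.copy R[i] (R[i]^o).

Definition aseq (R : realType) (c t : R) (n : nat) : R := c `^ (t ^+ n).

Definition Fmap (R : realType) (c t : R) (n : nat) (p : R[i] * R[i]) : R[i] * R[i] :=
  (p.1 ^+ 2 + ((aseq c t n)%:C)%C * p.2, ((aseq c t n)%:C)%C * p.1).

Fixpoint iter_F (R : realType) (c t : R) (n : nat) (p : R[i] * R[i]) : R[i] * R[i] :=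
  match n with
  | 0%N => p
  | m.+1 => Fmap c t m.+1 (iter_F c t m p)
  end.

Definition Omega (R : realType) (c t : R) : set (R[i] * R[i]) :=
  [set p | (fun n => iter_F c t n p) @ \oo --> ((0 : R[i]), (0 : R[i]))].

(* delta_n = max {|z_n|, |w_n| : (z,w) in K}, written as the supremum (which is
   a maximum for compact K). The modulus `|z| : R[i] is real; complex.Re extracts it as an element of R. *)
Definition delta (R : realType) (c t : R) (K : set (R[i] * R[i])) (n : nat) : R :=
  sup [set Num.max (complex.Re `|(iter_F c t n p).1|) (complex.Re `|(iter_F c t n p).2|) | p in K].

From HB Require Import structures.
From mathcomp Require Import all_boot all_order all_algebra.
From mathcomp Require Import all_classical all_reals all_analysis.
From mathcomp.real_closed Require Import complex.
From mathcomp Require Import ring lra.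
Import Order.TTheory GRing.Theory Num.Theory.
Import numFieldNormedType.Exports.
Local Open Scope ring_scope.
Local Open Scope classical_set_scope.

(* Write m_n(p) = max(|z_n|, |w_n|).  The proof separates three ingredients.
   1. Real recurrences: m_{n+1} <= m_n^2 + a_{n+1} m_n.  If the weights satisfy
      2 a_j^2 <= b a_{j+1} from N0 on, then once m_N <= a_{N+1} for some
      N >= N0 the sequence is trapped: m_{N+k} <= a_{N+k+1} b^k.  If instead
      m stayed above the weights, the recurrence would be dominated by
      squaring, 2 m_{N+k} <= (2 m_N)^(2^k).
   2. The weights a_n = c^(t^n): since t < 2 they eventually satisfy the
      contraction condition, and c^(2^k) eventually lies below them, so a
      sequence tending to 0 must enter the region below the weights.
   3. Topology: every point of Omega enters that region at some N >= N0, the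
      entry condition is open, and compactness of K makes the entry time
      uniform on K. *)

Lemma powers_unbounded {R : realType} (u M : R) : 1 < u -> \forall k \near \oo, M <= u ^+ k.
Proof.
move=> u_gt1; have u_gt0 : 0 < u by apply: lt_trans ltr01 u_gt1.
have Vu_lt1 : `|u^-1| < 1 by rewrite ger0_norm ?invr_ge0 ?ltW // invf_lt1.
have M1_gt0 : 0 < (`|M| + 1)^-1 by rewrite invr_gt0 ltr_wpDl.
near=> k.
have : u^-1 ^+ k < (`|M| + 1)^-1.
  by near: k; apply: (@cvgr_lt R _ _ _ _ _ (cvg_expr Vu_lt1)).
rewrite exprVn ltf_pV2 ?posrE ?exprn_gt0 ?ltr_wpDl // => lt_k.
by apply: le_trans _ (ltW lt_k); rewrite (le_trans (ler_norm M)) // lerDl.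
Unshelve. all: by end_near.
Qed.

Section Recurrence.
Context {R : realFieldType} {a m : nat -> R}.
Hypothesis a_gt0 : forall n, 0 < a n.
Hypothesis m_ge0 : forall n, 0 <= m n.
Hypothesis m_step : forall n, m n.+1 <= m n ^+ 2 + a n.+1 * m n.

Lemma recurrence_contract (b : R) j k : 0 < b <= 1 ->
  2 * a j.+1 ^+ 2 <= b * a j.+2 ->
  m j <= a j.+1 * b ^+ k -> m j.+1 <= a j.+2 * b ^+ k.+1.
Proof.
move=> /andP[b_gt0 b_le1] weight_le mj_le.
have B_ge0 : 0 <= b ^+ k by rewrite exprn_ge0 // ltW.
have B_le1 : b ^+ k <= 1 by rewrite exprn_ile1 // ltW.
have A_gt0 := a_gt0 j.+1; have mj_ge0 := m_ge0 j.
have sq_le : m j ^+ 2 <= a j.+1 ^+ 2 * b ^+ k.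
  apply: le_trans (_ : (a j.+1 * b ^+ k) ^+ 2 <= _).
    by rewrite ler_pXn2r // nnegrE mulr_ge0 // ltW.
  by rewrite exprMn ler_wpM2l ?sqr_ge0 // expr2 ler_piMr.
have lin_le : a j.+1 * m j <= a j.+1 ^+ 2 * b ^+ k.
  by rewrite expr2 -mulrA ler_pM2l.
rewrite exprS; have := ler_wpM2r B_ge0 weight_le; have := m_step j; lra.
Qed.

Lemma recurrence_trapped (b : R) N0 N : 0 < b <= 1 ->
  (forall j, (N0 <= j)%N -> 2 * a j ^+ 2 <= b * a j.+1) ->
  (N0 <= N)%N -> m N <= a N.+1 ->
  forall k, m (N + k) <= a (N + k).+1 * b ^+ k.
Proof.
move=> b_01 weight_le le_N0N mN_le; elim=> [|k IH]; first by rewrite addn0 mulr1.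
rewrite addnS; apply: recurrence_contract => //.
by apply: weight_le; apply: leqW; rewrite (leq_trans le_N0N) ?leq_addr.
Qed.

Lemma recurrence_squaring N :
  (forall n, (N <= n)%N -> a n.+1 <= m n) ->
  forall k, 2 * m (N + k) <= (2 * m N) ^+ (2 ^ k).
Proof.
move=> above; elim=> [|k IH]; first by rewrite addn0 expn0 expr1.
have am_le := above (N + k)%N (leq_addr _ _).
have mm_ge0 := m_ge0 (N + k).
have step_le : 2 * m (N + k).+1 <= (2 * m (N + k)) ^+ 2.
  by have := m_step (N + k); nra.
rewrite addnS expnS mulnC exprM; apply: le_trans step_le _.
have two_m_ge0 : 0 <= 2 * m (N + k) by rewrite mulr_ge0.
by rewrite ler_pXn2r // nnegrE // exprn_ge0 // mulr_ge0.
Qed.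

End Recurrence.

Section Weights.
Context {R : realType}.
Variables (c t : R).
Hypotheses (c_gt0 : 0 < c) (c_lt1 : c < 1) (t_gt1 : 1 < t) (t_lt2 : t < 2).

Let c_01 : 0 < c <= 1. Proof. by rewrite c_gt0 ltW. Qed.

Lemma aseq_gt0 n : 0 < aseq c t n.
Proof. exact: powR_gt0. Qed.

(* a_n^2 = c^((2-t) t^n) a_{n+1}: since t < 2, squaring a_n gains the factor
   c^((2-t) t^n), which tends to 0. *)
Lemma aseq_sqr n : aseq c t n ^+ 2 = c `^ ((2 - t) * t ^+ n) * aseq c t n.+1.
Proof.
rewrite /aseq expr2 -!powRD ?(gt_eqF c_gt0) ?implybT //.
by congr (_ `^ _); rewrite exprS; ring.
Qed.

Lemma aseq_contract (b : R) : 0 < b ->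
  \forall j \near \oo, 2 * aseq c t j ^+ 2 <= b * aseq c t j.+1.
Proof.
move=> b_gt0.
have Vc_gt1 : 1 < c^-1 by rewrite invf_gt1.
have [k0 _ ck_small] := powers_unbounded _ (2 / b) Vc_gt1.
have ck_le : c ^+ k0 <= b / 2.
  have := ck_small k0 (leqnn k0).
  by rewrite -invf_div exprVn lef_pV2 ?posrE ?exprn_gt0 ?divr_gt0.
near=> j.
have k_le : k0%:R <= (2 - t) * t ^+ j.
  rewrite mulrC -ler_pdivrMr ?subr_gt0 //.
  by near: j; apply: powers_unbounded.
have := ger_powR c_01 k_le; rewrite powR_mulrn ?(ltW c_gt0) // => pow_le.
rewrite aseq_sqr mulrA ler_pM2r ?aseq_gt0 //.
by rewrite mulrC -ler_pdivlMr //; apply: le_trans pow_le ck_le.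
Unshelve. all: by end_near.
Qed.

(* Doubly exponential decay beats the weights: for every offset N, eventually
   c^(2^k) <= a_{N+k}, because t^(N+k) <= 2^k for large k. *)
Lemma aseq_ge_doubling N : \forall k \near \oo, c ^+ (2 ^ k) <= aseq c t (N + k).
Proof.
have t_gt0 : 0 < t by apply: lt_trans ltr01 t_gt1.
near=> k.
have tN_le : t ^+ N <= (2 / t) ^+ k.
  by near: k; apply: powers_unbounded; rewrite ltr_pdivlMr // mul1r.
have : t ^+ (N + k) <= (2 ^ k)%:R.
  rewrite exprD natrX -[2%:R](@mulfVK _ t) ?gt_eqF // exprMn.
  by rewrite ler_pM2r ?exprn_gt0.
by move/(ger_powR c_01); rewrite powR_mulrn ?(ltW c_gt0).
Unshelve. all: by end_near.
Qed.

(* A nonnegative sequence obeying the recurrence with weights a_n and tending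
   to 0 drops below the weights infinitely often: otherwise it would decay
   like c^(2^k), faster than a_n = c^(t^n) with t < 2. *)
Lemma recurrence_enters (m : nat -> R) :
  (forall n, 0 <= m n) -> (forall n, m n.+1 <= m n ^+ 2 + aseq c t n.+1 * m n) ->
  (\forall n \near \oo, m n < c / 2) ->
  forall N0, exists2 N, (N0 <= N)%N & m N < aseq c t N.+1.
Proof.
move=> m_ge0 m_step [N1 _ m_small] N0.
have [//|never] := pselect (exists2 N, (N0 <= N)%N & m N < aseq c t N.+1).
exfalso.
pose N := maxn N0 N1.
have above n : (N <= n)%N -> aseq c t n.+1 <= m n.
  move=> le_Nn; rewrite leNgt; apply/negP => lt_n; apply: never.
  by exists n => //; apply: leq_trans le_Nn; apply: leq_maxl.
have [k _ doubling] := aseq_ge_doubling N.+1.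
have := recurrence_squaring m_ge0 m_step _ above k.
have mN_le : 2 * m N <= c.
  by have := m_small N (leq_maxr _ _); rewrite /= ltr_pdivlMr //; lra.
have : (2 * m N) ^+ (2 ^ k) <= c ^+ (2 ^ k).
  by rewrite ler_pXn2r ?expn_gt0 ?nnegrE ?mulr_ge0 // ltW.
have := doubling k (leqnn k); have := above (N + k)%N (leq_addr _ _).
rewrite addSn; have := aseq_gt0 (N + k).+1; lra.
Qed.

End Weights.

Section Modulus.
Context {R : rcfType}.

Definition cabs (z : R[i]) : R := complex.Re `|z|.

Lemma cabsE z : `|z| = (cabs z)%:C%C.
Proof. by rewrite /cabs RRe_real // normr_real. Qed.

Lemma cabs_ge0 z : 0 <= cabs z.
Proof. by have := normr_ge0 z; rewrite cabsE lecR. Qed.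

Lemma cabsM x y : cabs (x * y) = cabs x * cabs y.
Proof. by apply: complexI; rewrite -cabsE normrM !cabsE -rmorphM. Qed.

Lemma cabsD x y : cabs (x + y) <= cabs x + cabs y.
Proof. by have := ler_normD x y; rewrite !cabsE -rmorphD lecR. Qed.

Lemma cabs_real (r : R) : cabs r%:C%C = `|r|.
Proof. by rewrite /cabs normc_def /= expr0n /= addr0 sqrtr_sqr. Qed.

Lemma cabs_distC x y : cabs (x - y) = cabs (y - x).
Proof. by rewrite /cabs distrC. Qed.

Definition pnorm (p : R[i] * R[i]) : R := Num.max (cabs p.1) (cabs p.2).

Lemma pnorm_ge0 p : 0 <= pnorm p.
Proof. by rewrite le_max cabs_ge0. Qed.

End Modulus.

Section ModulusLimits.
Context {R : realType}.

Lemma cabs_lt_near {T : Type} {F : set_system T} {FF : Filter F}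
    (f : T -> R[i]) (l : R[i]) (e : R) :
  f @ F --> l -> cabs l < e -> \forall y \near F, cabs (f y) < e.
Proof.
move=> f_l l_lt; have eps_gt0 : (0 : R[i]) < (e - cabs l)%:C%C by rewrite ltcR subr_gt0.
apply: filterS (@cvgr_dist_lt R[i] R[i]^o T F FF f l f_l _ eps_gt0) => y.
rewrite cabsE ltcR => dist_lt; have := cabsD l (f y - l).
by rewrite addrC subrK cabs_distC; lra.
Qed.

Lemma pnorm_lt_near {T : Type} {F : set_system T} {FF : Filter F}
    (g : T -> R[i] * R[i]) (l : R[i] * R[i]) (e : R) :
  g @ F --> l -> pnorm l < e -> \forall y \near F, pnorm (g y) < e.
Proof.
move=> g_l; rewrite /pnorm gt_max => /andP[l1_lt l2_lt].
have g1_l : (fun y => (g y).1) @ F --> l.1 by apply: cvg_comp g_l _; exact: cvg_fst.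
have g2_l : (fun y => (g y).2) @ F --> l.2 by apply: cvg_comp g_l _; exact: cvg_snd.
have lt1 := cabs_lt_near _ _ _ g1_l l1_lt; have lt2 := cabs_lt_near _ _ _ g2_l l2_lt.
near=> y; rewrite gt_max; apply/andP; split; near: y; [exact: lt1 | exact: lt2].
Unshelve. all: by end_near.
Qed.

End ModulusLimits.

Section Orbit.
Context {R : realType}.
Variables (c t : R).
Hypothesis c_gt0 : 0 < c.

Definition orbit_norm (n : nat) (p : R[i] * R[i]) : R := pnorm (iter_F c t n p).

Lemma orbit_norm_step n p :
  orbit_norm n.+1 p <= orbit_norm n p ^+ 2 + aseq c t n.+1 * orbit_norm n p.
Proof.
rewrite /orbit_norm /pnorm /= /Fmap /=.
set z := (iter_F c t n p).1; set w := (iter_F c t n p).2.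
set M := Num.max (cabs z) (cabs w); set A := aseq c t n.+1.
have A_gt0 : 0 < A by exact: aseq_gt0.
have z_le : cabs z <= M by rewrite le_max lexx.
have w_le : cabs w <= M by rewrite le_max lexx orbT.
have zz_le : cabs z ^+ 2 <= M ^+ 2 by rewrite ler_pXn2r ?nnegrE ?cabs_ge0 ?pnorm_ge0.
rewrite ge_max !cabsM cabs_real (ger0_norm (ltW A_gt0)); apply/andP; split.
- apply: le_trans (cabsD _ _) _.
  rewrite [z ^+ 2]expr2 !cabsM cabs_real (ger0_norm (ltW A_gt0)) -expr2.
  by rewrite lerD // ler_pM2l.
- by apply: le_trans (ler_wpM2l (ltW A_gt0) z_le) _; rewrite ler_wpDl ?sqr_ge0.
Qed.

Lemma Fmap_continuous n : continuous (Fmap c t n).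
Proof.
move=> p; apply: (@cvg_pair _ _ _ (nbhs p) (nbhs _) (nbhs _)).
  apply: (@cvgD _ R[i]^o _ _ _ (fun q : R[i] * R[i] => q.1 ^+ 2)).
    by rewrite expr2; apply: cvgM; exact: cvg_fst.
  by apply: cvgM; [exact: cvg_cst | exact: cvg_snd].
by apply: cvgM; [exact: cvg_cst | exact: cvg_fst].
Qed.

Lemma iter_F_continuous n : continuous (iter_F c t n).
Proof.
elim: n => [|n IH] p /=; first exact: cvg_id.
by apply: continuous_comp; [exact: IH | exact: Fmap_continuous].
Qed.

Lemma orbit_norm_vanishes p e : Omega c t p -> 0 < e ->
  \forall n \near \oo, orbit_norm n p < e.
Proof.
move=> p_Omega e_gt0; apply: pnorm_lt_near p_Omega _.
by rewrite /pnorm /= cabs_real normr0 maxxx.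
Qed.

Lemma orbit_norm_lt_near N x e : orbit_norm N x < e ->
  \forall y \near x, orbit_norm N y < e.
Proof. exact: pnorm_lt_near (iter_F_continuous N x). Qed.

End Orbit.

(* A bound on the elements of an image set bounds its supremum; the bound must
   be nonnegative to cover the empty set, whose supremum is 0. *)
Lemma sup_image_le {R : realType} {T : Type} (f : T -> R) (A : set T) (r : R) :
  0 <= r -> (forall y, A y -> f y <= r) -> sup (f @` A) <= r.
Proof.
move=> r_ge0 f_le; have [[y Ay]|A_empty] := pselect (A !=set0).
  by apply: ge_sup; [exists (f y), y | move=> _ [x Ax <-]; exact: f_le].
suff -> : A = set0 by rewrite image_set0 sup0.
by apply/seteqP; split => // x Ax; apply: A_empty; exists x.
Qed.

Section UniformEntry.
Context {R : realType}.
Variables (c t b : R).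
Hypotheses (c_gt0 : 0 < c) (c_lt1 : c < 1) (t_gt1 : 1 < t) (t_lt2 : t < 2).
Hypothesis b_01 : 0 < b <= 1.
Variable N0 : nat.
Hypothesis weight_le : forall j, (N0 <= j)%N -> 2 * aseq c t j ^+ 2 <= b * aseq c t j.+1.

Lemma orbit_trapped N y : (N0 <= N)%N -> orbit_norm c t N y <= aseq c t N.+1 ->
  forall k, orbit_norm c t (N + k) y <= aseq c t (N + k).+1 * b ^+ k.
Proof.
exact: (recurrence_trapped (aseq_gt0 c t c_gt0) (fun n => pnorm_ge0 _)
  (orbit_norm_step c t c_gt0 ^~ y)).
Qed.

Lemma uniform_entry (K : set (R[i] * R[i])) : compact K -> K `<=` Omega c t ->
  \forall n \near \oo, forall y, K y -> orbit_norm c t n y <= aseq c t n.+1.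
Proof.
move=> K_compact K_Omega.
apply: (proj1 (compact_near_coveringP K) K_compact) => x Kx.
have c2_gt0 : 0 < c / 2 by rewrite divr_gt0.
have [N le_N0N entered] := recurrence_enters c t c_gt0 c_lt1 t_gt1 t_lt2
  (orbit_norm c t ^~ x) (fun n => pnorm_ge0 _) (orbit_norm_step c t c_gt0 ^~ x)
  (orbit_norm_vanishes c t _ _ (K_Omega x Kx) c2_gt0) N0.
exists ([set y | orbit_norm c t N y < aseq c t N.+1], [set n | (N <= n)%N]).
  by split; [exact: orbit_norm_lt_near | exists N].
move=> [y n] /= [y_entered le_Nn].
have := orbit_trapped N y le_N0N (ltW y_entered) (n - N); rewrite subnKC //.
have bk_le1 : b ^+ (n - N) <= 1.
  by case/andP: b_01 => b_gt0 b_le1; rewrite exprn_ile1 // ltW.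
by move/le_trans; apply; rewrite ler_piMr // ltW // aseq_gt0.
Qed.

End UniformEntry.

Theorem lemma4p1 (R : realType) (c t b : R)
  (hc0 : 0 < c) (hc1 : c < 1) (ht1 : 1 < t) (ht2 : t < 2)
  (hb0 : 0 < b) (hb1 : b < 1)
  (K : set (R[i] * R[i])) (hK : compact K) (hKO : K `<=` Omega c t) :
  exists n0 : nat, forall n k : nat, (n0 <= n)%N ->
    delta c t K (n + k) <= aseq c t (n + k + 1) * b ^+ k.
Proof.
have b_01 : 0 < b <= 1 by rewrite hb0 ltW.
have [N0 _ weight_le] := aseq_contract c t hc0 hc1 ht1 ht2 b hb0.
have [n1 _ entered] := uniform_entry c t b hc0 hc1 ht1 ht2 b_01 N0 weight_le K hK hKO.
exists (maxn n1 N0) => n k le_n; rewrite addn1.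
apply: sup_image_le => [|y Ky].
  by apply: mulr_ge0; apply: ltW; [exact: aseq_gt0 | exact: exprn_gt0].
apply: (orbit_trapped c t b hc0 b_01 N0 weight_le) (leq_trans (leq_maxr _ _) le_n) _ k.
by apply: entered Ky; apply: leq_trans (leq_maxl _ _) le_n.
Qed.
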